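(* Let $X$ be a nontrivial mm-space and $p\in[1,\infty)$. Then for any $r>0$, $$\lim_{n\to\infty}\sup_{x\in X^n}\mu_X^{\otimes n}\big(U_r^{X_p^n}(x)\big)=0.$$
   Context: An mm-space is a triple $(X,d_X,\mu_X)$ with $(X,d_X)$ complete separable metric and $\mu_X$ a Borel probability measure, with $X=\operatorname{supp}\mu_X$ assumed; it is nontrivial if it is not mm-isomorphic to the one-point space (equivalently, its support has more than one point). $X_p^n$ denotes $X^n$ with metric $d(x,x')=(\sum_{i=1}^nd_X(x_i,x_i')^p)^{1/p}$ and measure $\mu_X^{\otimes n}$; $U_r^{X_p^n}(x)$ is the open ball of radius $r$ about $x$ in this metric. *)

From HB Require Import structures.
From mathcomp Require Import all_boot all_order all_algebra.
From mathcomp Require Import all_classical all_reals all_analysis.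
Set Implicit Arguments. Unset Strict Implicit. Unset Printing Implicit Defensive.
Import Order.TTheory GRing.Theory Num.Theory.
Local Open Scope classical_set_scope.
Local Open Scope ring_scope.

Section mm.
Context {R : realType} {T : Type}.
Variable dist : T -> T -> R.

Definition is_metric : Prop :=
  [/\ forall x y, 0 <= dist x y,
      forall x y, dist x y = 0 <-> x = y,
      forall x y, dist x y = dist y x
    & forall x y z, dist x z <= dist x y + dist y z].

Definition dball (x : T) (r : R) : set T := [set y | dist x y < r].

Definition dopen (U : set T) : Prop :=
  forall x, U x -> exists2 e : R, 0 < e & dball x e `<=` U.

Definition dcomplete : Prop :=
  forall u : nat -> T,
    (forall e : R, 0 < e -> exists N, forall m n, (N <= m)%N -> (N <= n)%N ->
       dist (u m) (u n) < e) ->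
    exists l : T, forall e : R, 0 < e -> exists N, forall n, (N <= n)%N ->
       dist (u n) l < e.

Definition dseparable : Prop :=
  exists D : set T, countable D /\
    forall U, dopen U -> U !=set0 -> U `&` D !=set0.
End mm.

Definition support {R : realType} {d} {T : measurableType d}
  (dist : T -> T -> R) (mu : set T -> \bar R) : set T :=
  [set x | forall U, dopen dist U -> U x -> (0 < mu U)%E].

Definition mm_space {R : realType} {d} (T : measurableType d)
  (dist : T -> T -> R) (mu : probability T R) : Prop :=
  [/\ is_metric dist, dcomplete dist, dseparable dist,
      (@measurable d T) = <<s dopen dist >>
    & support dist mu = setT].

Definition nontrivial_mm {R : realType} {d} (T : measurableType d)
  (dist : T -> T -> R) (mu : probability T R) : Prop :=
  exists x y, support dist mu x /\ support dist mu y /\ x <> y.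

Definition lp_dist {R : realType} {T : Type} (dist : T -> T -> R) (p : R)
  (n : nat) (x y : n.-tuple T) : R :=
  (\sum_(i < n) (dist (tnth x i) (tnth y i)) `^ p) `^ p^-1.

(* P is the product measure mu^{(x) n} on n.-tuple T (with the product
   sigma-algebra generated by the coordinates): it agrees with the product
   of mu on measurable rectangles (which determines it uniquely). *)
Definition is_product_measure {R : realType} {d} {T : measurableType d}
  (mu : probability T R) (n : nat) (P : probability (n.-tuple T) R) : Prop :=
  forall A : 'I_n -> set T, (forall i, measurable (A i)) ->
    P [set x | forall i, A i (tnth x i)] = (\prod_(i < n) mu (A i))%E.

(* Fix two points a <> b of the support and eps = d(a,b)/4.  Every eps-ball
   misses the eps-ball around a or the one around b, so all eps-balls have
   mass at most 1 - m for some m > 0.  A point of the l^p-ball of radius r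
   around x is eps-far from x in fewer than K coordinates, where
   r^p <= K eps^p; hence the ball is covered by (n+1)^K product sets, each
   constraining all but at most K coordinates to eps-balls, so its measure is
   at most (n+1)^K (1-m)^(n-K) <= (n+1)^K exp(-m(n-K)), which tends to 0. *)

From Pilot Require Import Defs.
From HB Require Import structures.
From mathcomp Require Import all_boot all_order all_algebra.
From mathcomp Require Import all_classical all_reals all_analysis.
From mathcomp Require Import lra ring.
Import Order.TTheory GRing.Theory Num.Theory numFieldNormedType.Exports.
Local Open Scope classical_set_scope.
Local Open Scope ring_scope.

Section metric_balls.
Context {R : realType} {T : Type} {dist : T -> T -> R}.
Hypothesis dist_metric : is_metric dist.

Lemma dball_open x e : dopen dist (dball dist x e).
Proof.
have [_ _ _ dist_tri] := dist_metric.
move=> y; rewrite /dball /= => xy; exists (e - dist x y); first by rewrite subr_gt0.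
by move=> z /= yz; have := dist_tri x y z; lra.
Qed.

Lemma dball_center x e : 0 < e -> dball dist x e x.
Proof. by have [_ dist_eq0 _ _] := dist_metric; rewrite /dball /= (dist_eq0 x x).2. Qed.

Lemma dball_disjoint_either a b x {e} : 4 * e <= dist a b ->
  dball dist x e `&` dball dist a e = set0 \/ dball dist x e `&` dball dist b e = set0.
Proof.
have [_ _ dist_sym dist_tri] := dist_metric.
move=> eab.
have [|/eqP/set0P[y [xy ay]]] := pselect (dball dist x e `&` dball dist a e = set0).
  by left.
right; apply/seteqP; split => // z [xz bz].
move: xy ay xz bz; rewrite /dball /= => xy ay xz bz.
have := dist_tri a y b; have := dist_tri y x b; have := dist_tri x z b.
by have := dist_sym y x; have := dist_sym z b; lra.
Qed.

End metric_balls.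

Section borel_balls.
Context {R : realType} {d : measure_display} {T : measurableType d}.
Context {dist : T -> T -> R}.
Hypotheses (dist_metric : is_metric dist)
  (measurable_borel : @measurable d T = <<s dopen dist >>).

Lemma measurable_dball x e : measurable (dball dist x e).
Proof. by rewrite measurable_borel; apply: sub_gen_smallest; exact: dball_open. Qed.

Lemma measurable_dist x : measurable_fun setT (dist x).
Proof.
apply: (measurability _ (measurable_realfun.RGenInftyO.measurableE R)).
move=> _ [_ [c ->] <-]; rewrite setTI.
suff -> : dist x @^-1` `]-oo, c[ = dball dist x c by exact: measurable_dball.
by apply/seteqP; split => y; rewrite /= in_itv.
Qed.

Lemma measurable_lp_dball (p : R) n (x : n.-tuple T) r :
  measurable (dball (lp_dist dist p (n := n)) x r).
Proof.
have mlp : measurable_fun setT (lp_dist dist p x).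
  apply: measurableT_comp (measurable_realfun.measurable_powR _) _.
  apply: measurable_sum => i.
  apply: measurableT_comp (measurable_realfun.measurable_powR _) _.
  exact: measurableT_comp (measurable_dist _) (measurable_tnth i).
have := mlp measurableT _ (measurable_itv `]-oo, r[); rewrite setTI.
by congr measurable; apply/seteqP; split => y; rewrite /= in_itv.
Qed.

End borel_balls.

Lemma probability_disjoint_le {R : realType} {d} {T : measurableType d}
    (P : probability T R) (A B : set T) :
  measurable A -> measurable B -> A `&` B = set0 -> (P A <= 1 - P B)%E.
Proof.
move=> mA mB AB; rewrite lee_suber_addr ?fin_num_measure //.
by rewrite -measureU // probability_le1 //; exact: measurableU.
Qed.

Section small_balls.
Context {R : realType} {d : measure_display} {T : measurableType d}.
Context {dist : T -> T -> R} (mu : probability T R).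
Hypotheses (dist_metric : is_metric dist)
  (measurable_borel : @measurable d T = <<s dopen dist >>).

Lemma nontrivial_dball_le : nontrivial_mm dist mu ->
  exists eps m : R, [/\ 0 < eps, 0 < m &
    forall x, (mu (dball dist x eps) <= (1 - m)%:E)%E].
Proof.
move=> [a [b [supp_a [supp_b ab]]]].
have [dist_ge0 dist_eq0 _ _] := dist_metric.
have dist_ab : 0 < dist a b.
  by rewrite lt_def dist_ge0 andbT; apply/eqP => /dist_eq0.
pose eps := dist a b / 4.
have eps_gt0 : 0 < eps by rewrite divr_gt0.
pose mass z := fine (mu (dball dist z eps)).
have massE z : mu (dball dist z eps) = (mass z)%:E.
  by rewrite fineK // fin_num_measure //; exact: measurable_dball.
have mass_gt0 z : Defs.support dist mu z -> 0 < mass z.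
  move=> /(_ _ (dball_open dist_metric z eps)).
  by rewrite massE lte_fin; apply; exact: dball_center.
exists eps, (Num.min (mass a) (mass b)); split => //.
  by rewrite lt_min !mass_gt0.
move=> x; have mball := measurable_dball dist_metric measurable_borel.
have four_eps : 4 * eps <= dist a b by rewrite mulrC divfK.
have [/(probability_disjoint_le mu)|/(probability_disjoint_le mu)] :=
    dball_disjoint_either dist_metric a b x four_eps.
- move=> /(_ (mball _ _) (mball _ _)) /le_trans; apply.
  by rewrite massE lee_fin lerB // ge_min lexx.
- move=> /(_ (mball _ _) (mball _ _)) /le_trans; apply.
  by rewrite massE lee_fin lerB // ge_min lexx orbT.
Qed.

End small_balls.

Definition tuple_rect {T : Type} {n : nat} (A : 'I_n -> set T) : set (n.-tuple T) :=
  [set y | forall i, A i (tnth y i)].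

Lemma measurable_tuple_rect {d} {T : measurableType d} n (A : 'I_n -> set T) :
  (forall i, measurable (A i)) -> measurable (tuple_rect A).
Proof.
move=> mA; suff -> : tuple_rect A = \bigcap_i ((fun y => tnth y i) @^-1` A i).
  apply: fin_bigcap_measurable => // i _.
  by rewrite -[_ @^-1` _]setTI; exact: measurable_tnth.
by apply/seteqP; split => [y yA i _|y yA i]; [exact: yA|exact: yA].
Qed.

Lemma measure_le_card_cover {d} {R : realFieldType} {T : semiRingOfSetsType d}
    (mu : {content set T -> \bar R})
    {I : finType} {F : I -> set T} {A : set T} {c : R} :
  measurable A -> (forall i, measurable (F i)) -> A `<=` \bigcup_i F i ->
  (forall i, (mu (F i) <= c%:E)%E) -> (mu A <= (#|I|%:R * c)%:E)%E.
Proof.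
move=> mA mF AF Fc; case: (pickP (@predT I)) => [i0 _|I0]; last first.
  suff -> : A = set0 by rewrite measure0 (eq_card0 I0) mul0r.
  by apply/seteqP; split => // y /AF[i]; have := I0 i.
pose G k := F (nth i0 (enum I) k).
have AG : A `<=` \big[setU/set0]_(k < #|I|) G k.
  move=> y /AF[i _ Fiy]; rewrite -bigcup_mkord.
  exists (index i (enum I)); first by rewrite /= cardE index_mem mem_enum.
  by rewrite /G nth_index ?mem_enum.
have := content_subadditive mu (F := G) (fun k _ => mF _) mA AG.
move=> /le_trans; apply.
have -> : (#|I|%:R * c)%:E = (\sum_(k < #|I|) c%:E)%E.
  by rewrite sumEFin sumr_const card_ord mulr_natl.
by apply: lee_sum => k _; exact: Fc.
Qed.

Section product_measure.
Context {R : realType} {d : measure_display} {T : measurableType d}.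
Context {mu : probability T R} {n : nat} {Pn : probability (n.-tuple T) R}.
Hypothesis Pn_product : is_product_measure mu Pn.

Lemma product_rect_le {G : {set 'I_n}} {B : 'I_n -> set T} {q : R} :
  (forall i, measurable (B i)) -> (forall i, (mu (B i) <= q%:E)%E) ->
  (Pn (tuple_rect (fun i => if i \in G then setT else B i)) <= (q ^+ #|~: G|)%:E)%E.
Proof.
move=> mB Bq; have mA i : measurable (if i \in G then setT else B i) by case: ifP.
rewrite Pn_product //.
rewrite (eq_bigr (fun i => (fine (mu (if i \in G then setT else B i)))%:E));
  last by move=> i _; rewrite fineK // fin_num_measure.
rewrite prodEFin lee_fin -prodr_const [leRHS]big_mkcond /=.
apply: ler_prod => i _; rewrite fine_ge0 //= inE if_neg.
case: ifP => _; first by rewrite probability_setT.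
by rewrite -[q]/(fine q%:E) fine_le // fin_num_measure.
Qed.

End product_measure.

(* A set of at most K elements of I is encoded as the set of values of a map
   'I_K -> option I; there are #|I|.+1 ^ K such maps. *)
Section codom_some.
Context {I : finType} {K : nat}.

Definition codom_some (t : {ffun 'I_K -> option I}) : {set I} :=
  [set i | Some i \in codom t].

Lemma card_codom_some t : (#|codom_some t| <= K)%N.
Proof.
rewrite -(card_imset _ (@Some_inj _)) -[K]card_ord -(size_codom t).
apply: leq_trans (card_size (codom t)); apply/subset_leq_card/fintype.subsetP.
by move=> _ /imsetP[i + ->]; rewrite inE.
Qed.

Lemma subset_codom_some (G : {set I}) :
  (#|G| <= K)%N -> exists t : {ffun 'I_K -> option I}, G \subset codom_some t.
Proof.
move=> GK; exists [ffun j : 'I_K => nth None (map Some (enum G)) j].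
apply/fintype.subsetP => i iG; rewrite inE; apply/codomP.
have jK : (index i (enum G) < K)%N.
  by rewrite (leq_trans _ GK) // cardE index_mem mem_enum.
exists (Ordinal jK); rewrite ffunE (nth_map i) ?nth_index ?mem_enum //.
by rewrite index_mem mem_enum.
Qed.

End codom_some.

Section lp_balls.
Context {R : realType} {T : Type} {dist : T -> T -> R}.
Hypothesis dist_ge0 : forall x y, 0 <= dist x y.
Context {p : R} {n : nat}.
Hypothesis p_gt0 : 0 < p.

Definition far_coords (eps : R) (x y : n.-tuple T) : {set 'I_n} :=
  [set i | eps <= dist (tnth x i) (tnth y i)].

Lemma card_far_coords_lt {eps r : R} {K : nat} {x y : n.-tuple T} :
  0 < eps -> r `^ p <= K%:R * eps `^ p -> lp_dist dist p x y < r ->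
  (#|far_coords eps x y| < K)%N.
Proof.
move=> eps_gt0 rK; rewrite /lp_dist; set s := \sum_(i < n) _ => sr.
have s_ge0 : 0 <= s by apply: sumr_ge0 => i _; exact: powR_ge0.
have s_lt : s < r `^ p.
  have -> : s = (s `^ p^-1) `^ p by rewrite -powRrM mulVf ?powRr1 ?gt_eqF.
  apply: gt0_ltr_powR => // /=.
  - by rewrite nnegrE powR_ge0.
  - by rewrite nnegrE (le_trans (powR_ge0 _ _) (ltW sr)).
have far_le : #|far_coords eps x y|%:R * eps `^ p <= s.
  rewrite /s (bigID (mem (far_coords eps x y))) /= -[leLHS]addr0.
  apply: lerD; last by apply: sumr_ge0 => i _; exact: powR_ge0.
  rewrite mulr_natl -sumr_const; apply: ler_sum => i; rewrite inE => epsi.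
  by apply: ge0_ler_powR; rewrite ?nnegrE ?(ltW eps_gt0) ?dist_ge0 ?(ltW p_gt0).
rewrite -(ltr_nat R) -(ltr_pM2r (powR_gt0 p eps_gt0)).
by rewrite (le_lt_trans far_le) // (lt_le_trans s_lt).
Qed.

Lemma lp_dball_sub_rects {eps r : R} {K : nat} (x : n.-tuple T) :
  0 < eps -> r `^ p <= K%:R * eps `^ p ->
  dball (lp_dist dist p (n := n)) x r `<=`
  \bigcup_(t : {ffun 'I_K -> option 'I_n})
    tuple_rect (fun i =>
      if i \in codom_some t then setT else dball dist (tnth x i) eps).
Proof.
move=> eps_gt0 rK y /= /(card_far_coords_lt eps_gt0 rK) /ltnW.
move=> /subset_codom_some[t far_t]; exists t => // i.
case: ifPn => // it; rewrite /dball /= ltNge; apply: contra it => epsi.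
by apply: (fintype.subsetP far_t); rewrite inE.
Qed.

End lp_balls.

Section product_lp_dball.
Context {R : realType} {d : measure_display} {T : measurableType d}.
Context {dist : T -> T -> R} {mu : probability T R}.
Hypotheses (dist_metric : is_metric dist)
  (measurable_borel : @measurable d T = <<s dopen dist >>).
Context {n : nat} {Pn : probability (n.-tuple T) R}.
Hypothesis Pn_product : is_product_measure mu Pn.

Lemma product_lp_dball_le {p r eps m : R} {K : nat} (x : n.-tuple T) :
  0 < p -> 0 < eps -> 0 <= m -> m <= 1 ->
  (forall z, (mu (dball dist z eps) <= (1 - m)%:E)%E) ->
  r `^ p <= K%:R * eps `^ p ->
  (Pn (dball (lp_dist dist p (n := n)) x r) <=
     ((n.+1)%:R ^+ K * expR (- m * (n%:R - K%:R)))%:E)%E.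
Proof.
move=> p_gt0 eps_gt0 m_ge0 m_le1 small_balls rK.
have [dist_ge0 _ _ _] := dist_metric.
have mball := measurable_dball dist_metric measurable_borel.
have pow_le_expR k : (1 - m) ^+ k <= expR (- m * k%:R).
  rewrite mulrC expRM_natl; apply: lerXn2r; rewrite ?nnegrE ?expR_ge0 ?subr_ge0 //.
  by have := expR_ge1Dx (- m); rewrite addrC.
have cover := lp_dball_sub_rects dist_ge0 p_gt0 x eps_gt0 rK.
have := measure_le_card_cover Pn _ _ cover.
rewrite card_ffun card_option !card_ord natrX; apply.
- exact: measurable_lp_dball.
- by move=> t; apply: measurable_tuple_rect => i; case: ifP.
move=> t; have := product_rect_le Pn_product (G := codom_some t)
  (fun i => mball (tnth x i) eps) (fun i => small_balls (tnth x i)).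
move=> /le_trans; apply.
rewrite lee_fin (le_trans (pow_le_expR _)) // ler_expR !mulNr lerN2 ler_wpM2l //.
rewrite -[in n%:R](card_ord n) -(cardsC (codom_some t)) natrD lerBlDl lerD2r ler_nat.
exact: card_codom_some.
Qed.

End product_lp_dball.

Section polynomial_exponential.
Context {R : realType}.

Lemma natrX_expRN_le (m : R) (K n : nat) : 0 < m ->
  n.+1%:R ^+ K * expR (- m * (n%:R - K%:R)) <=
  expR (m * K.+1%:R) * K.+1`!%:R / m ^+ K.+1 * n.+1%:R^-1.
Proof.
move=> m_gt0; set N : R := n.+1%:R; have N_gt0 : 0 < N by rewrite ltr0n.
have -> : - m * (n%:R - K%:R) = m * K.+1%:R - m * N by rewrite /N -!natr1; ring.
(* Only the term of degree K.+1 of the exponential series is needed. *)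
set L := (m * N) ^+ K.+1 / K.+1`!%:R.
have L_gt0 : 0 < L by rewrite divr_gt0 ?exprn_gt0 ?mulr_gt0 ?ltr0n ?fact_gt0.
have L_le : L <= expR (m * N).
  by have := expR_ge1Dxn K (ltW (mulr_gt0 m_gt0 N_gt0)); rewrite -/L; lra.
apply: (@le_trans _ _ (N ^+ K * (expR (m * K.+1%:R) / L))).
  rewrite expRD expRN ler_wpM2l ?exprn_ge0 ?(ltW N_gt0) // ler_wpM2l ?expR_ge0 //.
  by rewrite lef_pV2 ?posrE ?expR_gt0.
rewrite /L exprMn !exprS le_eqVlt; apply/orP; left; apply/eqP; field.
by rewrite !gt_eqF ?exprn_gt0 ?ltr0n ?fact_gt0.
Qed.

Lemma cvg_natrX_expRN (m : R) (K : nat) : 0 < m ->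
  (fun n : nat => n.+1%:R ^+ K * expR (- m * (n%:R - K%:R))) @ \oo --> 0.
Proof.
move=> m_gt0; set C := expR (m * K.+1%:R) * K.+1`!%:R / m ^+ K.+1.
apply: (squeeze_cvgr (f := fun=> 0) (h := (fun=> C) \* harmonic)).
- apply: nearW => n; rewrite /= mulr_ge0 ?exprn_ge0 ?expR_ge0 //=.
  exact: natrX_expRN_le.
- exact: cvg_cst.
- by rewrite -(mulr0 C); apply: cvgM; [exact: cvg_cst|exact: cvg_harmonic].
Qed.

End polynomial_exponential.

Theorem lemma4p6 (R : realType) (d : measure_display) (T : measurableType d)
  (dist : T -> T -> R) (mu : probability T R)
  (P : forall n : nat, probability (n.-tuple T) R) (p r : R) :
  mm_space dist mu -> nontrivial_mm dist mu ->
  1 <= p -> 0 < r ->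
  (forall n, is_product_measure mu (P n)) ->
  (fun n : nat => ereal_sup [set P n (dball (lp_dist dist p (n := n)) x r)
                            | x in [set: n.-tuple T]]) @ \oo --> 0%E.
Proof.
move=> [dist_metric _ _ measurable_borel _] nontrivial p_ge1 r_gt0 P_product.
have [eps [m [eps_gt0 m_gt0 small_balls]]] :=
  nontrivial_dball_le mu dist_metric measurable_borel nontrivial.
have [a _] := nontrivial.
have m_le1 : m <= 1.
  by rewrite -subr_ge0 -lee_fin (le_trans (measure_ge0 mu _) (small_balls a)).
have p_gt0 : 0 < p by rewrite (lt_le_trans ltr01).
have epsp_gt0 : 0 < eps `^ p by rewrite powR_gt0.
set K := Num.Def.archi_bound (r `^ p / eps `^ p).
have rK : r `^ p <= K%:R * eps `^ p.
  rewrite -ler_pdivrMr // ltW // archi_boundP // divr_ge0 ?powR_ge0 //.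
apply: (squeeze_cvge (f := fun=> 0%E)
  (h := fun n => (n.+1%:R ^+ K * expR (- m * (n%:R - K%:R)))%:E)); last first.
- by apply: cvg_EFin; [exact: nearW | exact: cvg_natrX_expRN].
- exact: cvg_cst.
apply: nearW => n; apply/andP; split.
  pose x0 := [tuple of nseq n a].
  apply: le_trans (measure_ge0 (P n) (dball (lp_dist dist p (n := n)) x0 r)) _.
  by apply: ereal_sup_ubound; exists x0.
apply: ge_ereal_sup => _ [x _ <-].
exact: (product_lp_dball_le dist_metric measurable_borel (P_product n) x
  p_gt0 eps_gt0 (ltW m_gt0) m_le1 small_balls rK).
Qed.
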